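(* Let $\mathbf C$ be a topological category, $G$ a topologised group and $U\to G$ an open normal subgroup. Then the projection $G\to G/U$ admits a section in $\mathbf C$.
   Context: A concrete category is a category $\mathbf C$ with a faithful functor $\mathfrak z:\mathbf C\to\mathbf{Set}$; it admits discrete objects if it has finite limits and $\mathfrak z$ has a fully faithful left adjoint $\mathbf F$. An object $X$ is discrete if $\mathfrak z:\mathrm{Hom}(X,Y)\to\mathrm{Hom}_{\mathbf{Set}}(\mathfrak zX,\mathfrak zY)$ is bijective for all $Y$. $\mathbf C$ is topological if $\mathbf F$ commutes with finite limits and for every discrete $D$ and all $X,Y$ the natural map $\mathrm{Hom}(D\times X,Y)\to\mathrm{Hom}_{\mathbf{Set}}(\mathfrak zD,\mathrm{Hom}(X,Y))$ is bijective. A topologised group is a group object in $\mathbf C$. A morphism $N\to G$ of topologised groups is normal if its cokernel $G\to G/N$ exists in the category of topologised groups and has kernel exactly $N\to G$; it is an open normal subgroup if moreover $G/N$ is discrete. *)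

Set Implicit Arguments.
Set Universe Polymorphism.

(* "Set" is modelled by a universe of Rocq types.                      *)
Record ConcreteCat := {
  Ob : Type;
  Hom : Ob -> Ob -> Type;
  idm : forall X, Hom X X;
  comp : forall X Y Z, Hom Y Z -> Hom X Y -> Hom X Z;
  comp_assoc : forall X Y Z W (h : Hom Z W) (g : Hom Y Z) (f : Hom X Y),
      comp h (comp g f) = comp (comp h g) f;
  comp_id_l : forall X Y (f : Hom X Y), comp (idm Y) f = f;
  comp_id_r : forall X Y (f : Hom X Y), comp f (idm X) = f;
  z : Ob -> Type;
  zmap : forall X Y, Hom X Y -> z X -> z Y;
  zmap_id : forall X (x : z X), zmap (idm X) x = x;
  zmap_comp : forall X Y Z (g : Hom Y Z) (f : Hom X Y) (x : z X),
      zmap (comp g f) x = zmap g (zmap f x);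
  zmap_faithful : forall X Y (f g : Hom X Y),
      (forall x, zmap f x = zmap g x) -> f = g;
  term : Ob;
  bang : forall X, Hom X term;
  bang_unique : forall X (f : Hom X term), f = bang X;
  prod : Ob -> Ob -> Ob;
  pr1 : forall X Y, Hom (prod X Y) X;
  pr2 : forall X Y, Hom (prod X Y) Y;
  pair : forall W X Y, Hom W X -> Hom W Y -> Hom W (prod X Y);
  pair_pr1 : forall W X Y (f : Hom W X) (g : Hom W Y), comp (pr1 X Y) (pair f g) = f;
  pair_pr2 : forall W X Y (f : Hom W X) (g : Hom W Y), comp (pr2 X Y) (pair f g) = g;
  pair_unique : forall W X Y (h : Hom W (prod X Y)),
      h = pair (comp (pr1 X Y) h) (comp (pr2 X Y) h);
  eqz : forall X Y, Hom X Y -> Hom X Y -> Ob;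
  eqz_incl : forall X Y (f g : Hom X Y), Hom (eqz f g) X;
  eqz_eq : forall X Y (f g : Hom X Y), comp f (eqz_incl f g) = comp g (eqz_incl f g);
  eqz_lift : forall X Y (f g : Hom X Y) W (k : Hom W X), comp f k = comp g k -> Hom W (eqz f g);
  eqz_lift_spec : forall X Y (f g : Hom X Y) W (k : Hom W X) (H : comp f k = comp g k),
      comp (eqz_incl f g) (eqz_lift H) = k;
  eqz_lift_unique : forall X Y (f g : Hom X Y) W (k : Hom W X) (h : Hom W (eqz f g)),
      comp (eqz_incl f g) h = k -> forall H : comp f k = comp g k, h = eqz_lift H
}.

Arguments idm {c} X.
Arguments comp {c X Y Z} _ _.
Arguments zmap {c X Y} _ _.
Arguments term {c}.
Arguments bang {c} X.
Arguments prod {c} _ _.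
Arguments pr1 {c} X Y.
Arguments pr2 {c} X Y.
Arguments pair {c W X Y} _ _.

(* A left adjoint F of z, given by universal arrows eta_S : S -> z(F S) *)
Record LeftAdjoint (C : ConcreteCat) := {
  Fob : Type -> Ob C;
  eta : forall S : Type, S -> z C (Fob S);
  adj_lift : forall (S : Type) (Y : Ob C), (S -> z C Y) -> Hom C (Fob S) Y;
  adj_lift_spec : forall S Y (f : S -> z C Y) (s : S), zmap (@adj_lift S Y f) (@eta S s) = f s;
  adj_lift_unique : forall S Y (f : S -> z C Y) (g : Hom C (Fob S) Y),
      (forall s, zmap g (@eta S s) = f s) -> g = @adj_lift S Y f
}.

Arguments Fob {C} _ _.
Arguments eta {C} _ {S} _.
Arguments adj_lift {C} _ {S Y} _.

Definition Fmap (C : ConcreteCat) (A : LeftAdjoint C) (S T : Type) (f : S -> T)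
  : Hom C (Fob A S) (Fob A T) :=
  adj_lift A (fun s => eta A (f s)).


Definition bijective {A B : Type} (f : A -> B) : Prop :=
  (forall x y, f x = f y -> x = y) /\ (forall b, exists a, f a = b).

Arguments Fmap {C} A {S T} f.

Definition fully_faithful (C : ConcreteCat) (A : LeftAdjoint C) : Prop :=
  forall S T : Type, bijective (@Fmap C A S T).

(* C admits discrete objects: finite limits (built into ConcreteCat) and
   z has a fully faithful left adjoint. *)
Arguments fully_faithful {C} A.

Record AdmitsDiscrete (C : ConcreteCat) := {
  disc_adj : LeftAdjoint C;
  disc_ff : fully_faithful disc_adj
}.

Definition discrete (C : ConcreteCat) (X : Ob C) : Prop :=
  forall Y : Ob C, bijective (fun f : Hom C X Y => zmap f).
Arguments discrete {C} X.

(* F commutes with finite limits (terminal object, binary products,    *)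
(* equalizers; these generate all finite limits).                      *)
Definition F_preserves_terminal (C : ConcreteCat) (A : LeftAdjoint C) : Prop :=
  forall X : Ob C, exists t : Hom C X (Fob A unit),
    forall t' : Hom C X (Fob A unit), t' = t.

Arguments F_preserves_terminal {C} A.

Definition F_preserves_products (C : ConcreteCat) (A : LeftAdjoint C) : Prop :=
  forall (S T : Type) (X : Ob C) (a : Hom C X (Fob A S)) (b : Hom C X (Fob A T)),
    exists h : Hom C X (Fob A (S * T)%type),
      (comp (Fmap A (@fst S T)) h = a /\ comp (Fmap A (@snd S T)) h = b) /\
      forall h' : Hom C X (Fob A (S * T)%type),
        comp (Fmap A (@fst S T)) h' = a -> comp (Fmap A (@snd S T)) h' = b -> h' = h.

Arguments F_preserves_products {C} A.

Definition F_preserves_equalizers (C : ConcreteCat) (A : LeftAdjoint C) : Prop :=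
  forall (S T : Type) (f g : S -> T) (X : Ob C) (k : Hom C X (Fob A S)),
    comp (Fmap A f) k = comp (Fmap A g) k ->
    exists h : Hom C X (Fob A {s : S | f s = g s}),
      comp (Fmap A (@proj1_sig S (fun s => f s = g s))) h = k /\
      forall h' : Hom C X (Fob A {s : S | f s = g s}),
        comp (Fmap A (@proj1_sig S (fun s => f s = g s))) h' = k -> h' = h.

Arguments F_preserves_equalizers {C} A.

Definition F_finite_limits (C : ConcreteCat) (A : LeftAdjoint C) : Prop :=
  F_preserves_terminal A /\ F_preserves_products A /\ F_preserves_equalizers A.

Arguments F_finite_limits {C} A.
Arguments disc_adj {C} _.

Definition point (C : ConcreteCat) (A : LeftAdjoint C) (D : Ob C) (d : z C D)
  : Hom C (Fob A unit) D :=
  adj_lift A (fun _ : unit => d).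

Arguments point {C} A {D} d.

(* The natural map Hom(D x X, Y) -> Hom_Set(zD, Hom(X,Y)),
   h |-> (d |-> h o <p_d o t, id_X>), where t : X -> F(1) ~ terminal is
   the (unique, when F preserves the terminal object) map to F(1). *)
Definition natural_map (C : ConcreteCat) (A : LeftAdjoint C) (D X Y : Ob C)
  (t : Hom C X (Fob A unit)) (h : Hom C (prod D X) Y) : z C D -> Hom C X Y :=
  fun d => comp h (pair (comp (point A d) t) (idm X)).

Arguments natural_map {C} A {D X Y} t h.

Definition topological (C : ConcreteCat) : Prop :=
  exists AD : AdmitsDiscrete C,
    F_finite_limits (disc_adj AD) /\
    forall (D X Y : Ob C), discrete D ->
      forall t : Hom C X (Fob (disc_adj AD) unit),
        bijective (@natural_map C (disc_adj AD) D X Y t).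

Definition prod_map (C : ConcreteCat) (X Y X' Y' : Ob C)
  (f : Hom C X X') (g : Hom C Y Y') : Hom C (prod X Y) (prod X' Y') :=
  pair (comp f (pr1 X Y)) (comp g (pr2 X Y)).

Arguments prod_map {C X Y X' Y'} f g.

Definition assoc_map (C : ConcreteCat) (X Y W : Ob C)
  : Hom C (prod (prod X Y) W) (prod X (prod Y W)) :=
  pair (comp (pr1 X Y) (pr1 (prod X Y) W))
       (pair (comp (pr2 X Y) (pr1 (prod X Y) W)) (pr2 (prod X Y) W)).

Arguments assoc_map {C} X Y W.

Record GroupObj (C : ConcreteCat) := {
  gcar : Ob C;
  gmul : Hom C (prod gcar gcar) gcar;
  gunit : Hom C term gcar;
  ginv : Hom C gcar gcar;
  gmul_assoc :
    comp gmul (prod_map gmul (idm gcar)) =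
    comp gmul (comp (prod_map (idm gcar) gmul) (assoc_map gcar gcar gcar));
  gmul_unit_l : comp gmul (pair (comp gunit (bang gcar)) (idm gcar)) = idm gcar;
  gmul_unit_r : comp gmul (pair (idm gcar) (comp gunit (bang gcar))) = idm gcar;
  gmul_inv_l : comp gmul (pair ginv (idm gcar)) = comp gunit (bang gcar);
  gmul_inv_r : comp gmul (pair (idm gcar) ginv) = comp gunit (bang gcar)
}.

Arguments gcar {C} _.
Arguments gmul {C} _.
Arguments gunit {C} _.

Definition is_group_hom (C : ConcreteCat) (G H : GroupObj C) (f : Hom C (gcar G) (gcar H)) : Prop :=
  comp f (gmul G) = comp (gmul H) (prod_map f f).

Arguments is_group_hom {C} G H f.

Definition trivial_hom (C : ConcreteCat) (G H : GroupObj C) : Hom C (gcar G) (gcar H) :=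
  comp (gunit H) (bang (gcar G)).

Arguments trivial_hom {C} G H.

Definition is_cokernel (C : ConcreteCat) (N G Q : GroupObj C)
  (i : Hom C (gcar N) (gcar G)) (q : Hom C (gcar G) (gcar Q)) : Prop :=
  is_group_hom G Q q /\ comp q i = trivial_hom N Q /\
  forall (H : GroupObj C) (f : Hom C (gcar G) (gcar H)),
    is_group_hom G H f -> comp f i = trivial_hom N H ->
    exists fb : Hom C (gcar Q) (gcar H),
      (is_group_hom Q H fb /\ comp fb q = f) /\
      forall fb' : Hom C (gcar Q) (gcar H),
        is_group_hom Q H fb' -> comp fb' q = f -> fb' = fb.

Arguments is_cokernel {C N G Q} i q.

Definition is_kernel (C : ConcreteCat) (N G Q : GroupObj C)
  (i : Hom C (gcar N) (gcar G)) (q : Hom C (gcar G) (gcar Q)) : Prop :=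
  is_group_hom N G i /\ comp q i = trivial_hom N Q /\
  forall (K : GroupObj C) (k : Hom C (gcar K) (gcar G)),
    is_group_hom K G k -> comp q k = trivial_hom K Q ->
    exists kb : Hom C (gcar K) (gcar N),
      (is_group_hom K N kb /\ comp i kb = k) /\
      forall kb' : Hom C (gcar K) (gcar N),
        is_group_hom K N kb' -> comp i kb' = k -> kb' = kb.

Arguments is_kernel {C N G Q} i q.

Definition normal_with_quotient (C : ConcreteCat) (N G Q : GroupObj C)
  (i : Hom C (gcar N) (gcar G)) (q : Hom C (gcar G) (gcar Q)) : Prop :=
  is_group_hom N G i /\ is_cokernel i q /\ is_kernel i q.

Arguments normal_with_quotient {C N G Q} i q.

(* open normal subgroup: moreover G/N is discrete *)
Definition open_normal_with_quotient (C : ConcreteCat) (N G Q : GroupObj C)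
  (i : Hom C (gcar N) (gcar G)) (q : Hom C (gcar G) (gcar Q)) : Prop :=
  normal_with_quotient i q /\ discrete (gcar Q).
Arguments open_normal_with_quotient {C N G Q} i q.

(* Since G/U is discrete, every map of underlying sets out of it is a
   morphism, so it suffices to show that q : G -> G/U is surjective on
   points and to choose preimages.  Surjectivity comes from the cokernel
   property: q is an epimorphism of topologised groups, and an epimorphism
   onto a discrete group is surjective by the classical argument for
   abstract groups, with test group the symmetric group of
   Y = bool * |G/U|.  Left translation phi1 and its conjugate phi2 by the
   involution sigma, which flips the flag exactly over the image S of q,
   agree on S; being equal after q, they agree everywhere, and comparing
   them at (true, 1) forces every point into S. *)

From Stdlib Require Import FunctionalExtensionality ProofIrrelevance ClassicalEpsilon Classical.

Set Implicit Arguments. Unset Strict Implicit.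

(* A point-set map out of a discrete object is a morphism; hence a morphism
   into a discrete object that is surjective on points has a section. *)
Lemma section_of_surjection (C : ConcreteCat) (X D : Ob C) (f : Hom C X D) :
  discrete D -> (forall d, exists x, zmap f x = d) ->
  exists s : Hom C D X, comp f s = idm D.
Proof.
  intros HD Hsurj.
  pose (pre := fun d => proj1_sig (constructive_indefinite_description _ (Hsurj d))).
  destruct (proj2 (HD X) pre) as [s Es].
  exists s. apply zmap_faithful. intro d. rewrite zmap_comp, zmap_id.
  rewrite (f_equal (fun k => k d) Es).
  exact (proj2_sig (constructive_indefinite_description _ (Hsurj d))).
Qed.

Section Points.
Variable C : ConcreteCat.
Variable A : LeftAdjoint C.
Hypothesis Aff : fully_faithful A.

(* The unit eta : T -> z(F T) is a bijection: injective because F is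
   faithful, surjective because F is full on maps out of unit. *)
Lemma eta_inj (T : Type) (x y : T) : eta A x = eta A y -> x = y.
Proof.
  intro E. destruct (Aff unit T) as [Finj _].
  assert (EF : Fmap A (fun _ : unit => x) = Fmap A (fun _ : unit => y)).
  { unfold Fmap. f_equal. apply functional_extensionality. intros _. exact E. }
  exact (f_equal (fun f => f tt) (Finj _ _ EF)).
Qed.

Lemma point_spec (D : Ob C) (d : z C D) : zmap (point A d) (eta A tt) = d.
Proof. exact (adj_lift_spec A _ (fun _ : unit => d) tt). Qed.

Lemma eta_surj (T : Type) (y : z C (Fob A T)) : exists t, eta A t = y.
Proof.
  destruct (proj2 (Aff unit T) (point A y)) as [f Hf].
  exists (f tt). rewrite <- (point_spec y), <- Hf.
  symmetry. exact (adj_lift_spec A _ (fun s => eta A (f s)) tt).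
Qed.

Lemma unit_elem (u : z C (Fob A unit)) : u = eta A tt.
Proof. destruct (eta_surj u) as [[] <-]. reflexivity. Qed.

Lemma point_inj (X : Ob C) (x x' : z C X) : point A x = point A x' -> x = x'.
Proof. intro E. rewrite <- (point_spec x), <- (point_spec x'), E. reflexivity. Qed.

Lemma comp_point (X Y : Ob C) (f : Hom C X Y) (x : z C X) :
  comp f (point A x) = point A (zmap f x).
Proof.
  apply zmap_faithful. intro u. rewrite (unit_elem u), zmap_comp, !point_spec. reflexivity.
Qed.

Lemma term_elem (w w' : z C term) : w = w'.
Proof.
  apply point_inj.
  rewrite (bang_unique _ _ (point A w)), (bang_unique _ _ (point A w')). reflexivity.
Qed.

Definition mk (X Y : Ob C) (a : z C X) (b : z C Y) : z C (prod X Y) :=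
  zmap (pair (point A a) (point A b)) (eta A tt).

Lemma mk_pr1 (X Y : Ob C) (a : z C X) (b : z C Y) : zmap (pr1 X Y) (mk a b) = a.
Proof. unfold mk. rewrite <- zmap_comp, pair_pr1. apply point_spec. Qed.

Lemma mk_pr2 (X Y : Ob C) (a : z C X) (b : z C Y) : zmap (pr2 X Y) (mk a b) = b.
Proof. unfold mk. rewrite <- zmap_comp, pair_pr2. apply point_spec. Qed.

Lemma prod_ext (X Y : Ob C) (w : z C (prod X Y)) :
  w = mk (zmap (pr1 X Y) w) (zmap (pr2 X Y) w).
Proof.
  unfold mk. rewrite <- (comp_point (pr1 X Y) w), <- (comp_point (pr2 X Y) w), <- pair_unique.
  symmetry. apply point_spec.
Qed.

Lemma zpair (W X Y : Ob C) (f : Hom C W X) (g : Hom C W Y) (x : z C W) :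
  zmap (pair f g) x = mk (zmap f x) (zmap g x).
Proof.
  rewrite (prod_ext (zmap (pair f g) x)), <- !zmap_comp, pair_pr1, pair_pr2. reflexivity.
Qed.

Ltac zsimp := repeat rewrite ?zmap_comp, ?zpair, ?zmap_id, ?mk_pr1, ?mk_pr2.
Ltac zsimp_in H := repeat rewrite ?zmap_comp, ?zpair, ?zmap_id, ?mk_pr1, ?mk_pr2 in H.

Lemma F_discrete (T : Type) : discrete (Fob A T).
Proof.
  intro Y. split.
  - intros f g E. apply zmap_faithful. intro x. exact (f_equal (fun k => k x) E).
  - intro b. exists (adj_lift A (fun s => b (eta A s))). apply functional_extensionality.
    intro y. destruct (eta_surj y) as [t <-]. exact (adj_lift_spec A _ (fun s => b (eta A s)) t).
Qed.

Definition eta_inv (T : Type) (y : z C (Fob A T)) : T :=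
  proj1_sig (constructive_indefinite_description _ (eta_surj y)).

Lemma eta_inv_eta (T : Type) (t : T) : eta_inv (eta A t) = t.
Proof. apply eta_inj. exact (proj2_sig (constructive_indefinite_description _ (eta_surj _))). Qed.

Definition tstar : z C term := zmap (bang (Fob A unit)) (eta A tt).
Definition zmul (G : GroupObj C) (x y : z C (gcar G)) : z C (gcar G) := zmap (gmul G) (mk x y).
Definition zunit (G : GroupObj C) : z C (gcar G) := zmap (gunit G) tstar.
Definition zinv (G : GroupObj C) : z C (gcar G) -> z C (gcar G) := zmap (ginv G).

Lemma zunit_any (X : Ob C) (u : Hom C term X) (w : z C term) : zmap u w = zmap u tstar.
Proof. rewrite (term_elem w tstar). reflexivity. Qed.

Section PointGroupLaws.
Variable G : GroupObj C.

Lemma zassoc (x y w : z C (gcar G)) : zmul (zmul x y) w = zmul x (zmul y w).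
Proof.
  pose proof (f_equal (fun h => zmap h (mk (mk x y) w)) (gmul_assoc G)) as E. simpl in E.
  unfold prod_map, assoc_map in E. zsimp_in E. exact E.
Qed.

Lemma zunit_l (x : z C (gcar G)) : zmul (zunit G) x = x.
Proof.
  pose proof (f_equal (fun h => zmap h x) (gmul_unit_l G)) as E. simpl in E.
  zsimp_in E. rewrite zunit_any in E. exact E.
Qed.

Lemma zunit_r (x : z C (gcar G)) : zmul x (zunit G) = x.
Proof.
  pose proof (f_equal (fun h => zmap h x) (gmul_unit_r G)) as E. simpl in E.
  zsimp_in E. rewrite zunit_any in E. exact E.
Qed.

Lemma zinv_l (x : z C (gcar G)) : zmul (zinv x) x = zunit G.
Proof.
  pose proof (f_equal (fun h => zmap h x) (gmul_inv_l G)) as E. simpl in E.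
  zsimp_in E. rewrite zunit_any in E. exact E.
Qed.

Lemma zinv_r (x : z C (gcar G)) : zmul x (zinv x) = zunit G.
Proof.
  pose proof (f_equal (fun h => zmap h x) (gmul_inv_r G)) as E. simpl in E.
  zsimp_in E. rewrite zunit_any in E. exact E.
Qed.

Lemma idem_unit (u : z C (gcar G)) : zmul u u = u -> u = zunit G.
Proof.
  intro E. rewrite <- (zunit_l u) at 1. rewrite <- (zinv_l u), zassoc, E. reflexivity.
Qed.

Lemma inv_uniq (a b : z C (gcar G)) : zmul a b = zunit G -> b = zinv a.
Proof.
  intro E. rewrite <- (zunit_l b), <- (zinv_l a), zassoc, E, zunit_r. reflexivity.
Qed.

End PointGroupLaws.

Lemma hom_iff (G H : GroupObj C) (f : Hom C (gcar G) (gcar H)) :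
  is_group_hom G H f <-> forall x y, zmap f (zmul x y) = zmul (zmap f x) (zmap f y).
Proof.
  unfold is_group_hom, zmul. split.
  - intros E x y. pose proof (f_equal (fun h => zmap h (mk x y)) E) as E'. simpl in E'.
    unfold prod_map in E'. zsimp_in E'. exact E'.
  - intro E. apply zmap_faithful. intro w. rewrite (prod_ext w).
    generalize (zmap (pr1 _ _) w) (zmap (pr2 _ _) w). intros a b.
    unfold prod_map. zsimp. apply E.
Qed.

Lemma hom_unit (G H : GroupObj C) (f : Hom C (gcar G) (gcar H)) :
  is_group_hom G H f -> zmap f (zunit G) = zunit H.
Proof.
  intro Hf. apply idem_unit. rewrite <- (proj1 (hom_iff f) Hf), zunit_l. reflexivity.
Qed.

Lemma hom_inv (G H : GroupObj C) (f : Hom C (gcar G) (gcar H)) (x : z C (gcar G)) :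
  is_group_hom G H f -> zmap f (zinv x) = zinv (zmap f x).
Proof.
  intro Hf. apply inv_uniq. rewrite <- (proj1 (hom_iff f) Hf), zinv_r. exact (hom_unit Hf).
Qed.

Lemma hom_comp (G H K : GroupObj C) (g : Hom C (gcar H) (gcar K)) (f : Hom C (gcar G) (gcar H)) :
  is_group_hom H K g -> is_group_hom G H f -> is_group_hom G K (comp g f).
Proof.
  intros Hg Hf. apply hom_iff. intros x y.
  rewrite !zmap_comp, (proj1 (hom_iff f) Hf). exact (proj1 (hom_iff g) Hg _ _).
Qed.

Lemma hom_comp_trivial (G H K : GroupObj C) (f : Hom C (gcar H) (gcar K)) :
  is_group_hom H K f -> comp f (trivial_hom G H) = trivial_hom G K.
Proof.
  intro Hf. apply zmap_faithful. intro x. unfold trivial_hom. zsimp.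
  rewrite !(zunit_any _ (zmap (bang _) x)). exact (hom_unit Hf).
Qed.

Lemma discrete_lift_hom (D H : GroupObj C) (m : z C (gcar D) -> z C (gcar H)) :
  discrete (gcar D) -> (forall x y, m (zmul x y) = zmul (m x) (m y)) ->
  exists f : Hom C (gcar D) (gcar H), is_group_hom D H f /\ forall x, zmap f x = m x.
Proof.
  intros HD Hm. destruct (proj2 (HD (gcar H)) m) as [f Ef].
  exists f. split.
  - apply hom_iff. intros x y. rewrite Ef. apply Hm.
  - intro x. rewrite Ef. reflexivity.
Qed.

Lemma cokernel_epi (N G Q : GroupObj C) (i : Hom C (gcar N) (gcar G)) (q : Hom C (gcar G) (gcar Q)) :
  is_cokernel i q ->
  forall (H : GroupObj C) (f1 f2 : Hom C (gcar Q) (gcar H)),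
    is_group_hom Q H f1 -> is_group_hom Q H f2 -> comp f1 q = comp f2 q -> f1 = f2.
Proof.
  intros [Hq [Hqi Huniv]] H f1 f2 Hf1 Hf2 E.
  assert (Hkill : comp (comp f1 q) i = trivial_hom N H).
  { rewrite <- comp_assoc, Hqi. exact (hom_comp_trivial N Hf1). }
  destruct (Huniv H (comp f1 q) (hom_comp Hf1 Hq) Hkill) as [fb [_ Hunique]].
  rewrite (Hunique f1 Hf1 eq_refl), (Hunique f2 Hf2 (eq_sym E)). reflexivity.
Qed.

Section Topological.
Hypothesis Aterm : F_preserves_terminal A.
Hypothesis Atop : forall (D X Y : Ob C), discrete D -> forall t : Hom C X (Fob A unit),
    bijective (@natural_map C A D X Y t).

Lemma binary_morphism (D X Y : Ob C) (HD : discrete D) (m : z C D -> z C X -> z C Y)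
  (k : z C D -> Hom C X Y) (Hk : forall d x, zmap (k d) x = m d x) :
  {h : Hom C (prod D X) Y | forall w, zmap h w = m (zmap (pr1 D X) w) (zmap (pr2 D X) w)}.
Proof.
  destruct (constructive_indefinite_description _ (Aterm X)) as [t _].
  destruct (constructive_indefinite_description _ (proj2 (Atop Y HD t) k)) as [h Hh].
  exists h. intro w. rewrite <- Hk, <- Hh. unfold natural_map.
  rewrite zmap_comp. f_equal.
  rewrite zpair, zmap_comp, (unit_elem (zmap t _)), point_spec, zmap_id.
  apply prod_ext.
Qed.

Record perm (Y : Type) := Perm {
  pf : Y -> Y; pg : Y -> Y;
  pK : forall y, pg (pf y) = y; pK' : forall y, pf (pg y) = y }.

Lemma perm_eq (Y : Type) (p p' : perm Y) : (forall y, pf p y = pf p' y) -> p = p'.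
Proof.
  destruct p as [f g K K'], p' as [f' g' L L']. simpl. intro E.
  assert (Ef : f = f') by (apply functional_extensionality; exact E). subst f'.
  assert (Eg : g = g').
  { apply functional_extensionality. intro y. rewrite <- (L' y) at 1. apply K. }
  subst g'. f_equal; apply proof_irrelevance.
Qed.

Section SymmetricGroup.
Variable Y : Type.

Definition pmul (p p' : perm Y) : perm Y.
Proof.
  refine (@Perm Y (fun y => pf p (pf p' y)) (fun y => pg p' (pg p y)) _ _); intro y.
  - rewrite !pK. reflexivity.
  - rewrite !pK'. reflexivity.
Defined.

Definition pone : perm Y :=
  @Perm Y (fun y => y) (fun y => y) (fun _ => eq_refl) (fun _ => eq_refl).

Definition pinv (p : perm Y) : perm Y := @Perm Y (pg p) (pf p) (pK' p) (pK p).

Lemma sym_mul_ex : {h : Hom C (prod (Fob A (perm Y)) (Fob A (perm Y))) (Fob A (perm Y)) |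
   forall w, zmap h w = eta A (pmul (eta_inv (zmap (pr1 _ _) w)) (eta_inv (zmap (pr2 _ _) w)))}.
Proof.
  apply (binary_morphism (@F_discrete (perm Y))
           (m := fun d x => eta A (pmul (eta_inv d) (eta_inv x)))
           (k := fun d => adj_lift A (fun s => eta A (pmul (eta_inv d) s)))).
  intros d x. destruct (eta_surj x) as [s <-]. rewrite eta_inv_eta.
  exact (adj_lift_spec A _ (fun s => eta A (pmul (eta_inv d) s)) s).
Qed.

Definition sym_mul := proj1_sig sym_mul_ex.

Lemma sym_mul_spec (a b : perm Y) : zmap sym_mul (mk (eta A a) (eta A b)) = eta A (pmul a b).
Proof. unfold sym_mul. rewrite (proj2_sig sym_mul_ex), mk_pr1, mk_pr2, !eta_inv_eta. reflexivity. Qed.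

Definition sym_unit : Hom C term (Fob A (perm Y)) :=
  comp (adj_lift A (fun _ : unit => eta A pone))
       (proj1_sig (constructive_indefinite_description _ (Aterm term))).

Lemma sym_unit_spec w : zmap sym_unit w = eta A pone.
Proof.
  unfold sym_unit. rewrite zmap_comp, (unit_elem (zmap _ w)).
  exact (adj_lift_spec A _ (fun _ : unit => eta A pone) tt).
Qed.

Definition sym_inv : Hom C (Fob A (perm Y)) (Fob A (perm Y)) :=
  adj_lift A (fun s => eta A (pinv s)).

Lemma sym_inv_spec s : zmap sym_inv (eta A s) = eta A (pinv s).
Proof. exact (adj_lift_spec A _ (fun s => eta A (pinv s)) s). Qed.

Lemma sym_assoc :
  comp sym_mul (prod_map sym_mul (idm (Fob A (perm Y)))) =
  comp sym_mul (comp (prod_map (idm (Fob A (perm Y))) sym_mul)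
                     (assoc_map (Fob A (perm Y)) (Fob A (perm Y)) (Fob A (perm Y)))).
Proof.
  apply zmap_faithful. intro w. rewrite (prod_ext w).
  generalize (zmap (pr1 _ _) w) (zmap (pr2 _ _) w). intros ab c.
  rewrite (prod_ext ab). generalize (zmap (pr1 _ _) ab) (zmap (pr2 _ _) ab). intros a b.
  destruct (eta_surj a) as [a' <-], (eta_surj b) as [b' <-], (eta_surj c) as [c' <-].
  unfold prod_map, assoc_map. zsimp. rewrite !sym_mul_spec.
  f_equal. apply perm_eq. reflexivity.
Qed.

Lemma sym_unit_l :
  comp sym_mul (pair (comp sym_unit (bang (Fob A (perm Y)))) (idm (Fob A (perm Y))))
  = idm (Fob A (perm Y)).
Proof.
  apply zmap_faithful. intro x. destruct (eta_surj x) as [a <-]. zsimp.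
  rewrite sym_unit_spec, sym_mul_spec. f_equal. apply perm_eq. reflexivity.
Qed.

Lemma sym_unit_r :
  comp sym_mul (pair (idm (Fob A (perm Y))) (comp sym_unit (bang (Fob A (perm Y)))))
  = idm (Fob A (perm Y)).
Proof.
  apply zmap_faithful. intro x. destruct (eta_surj x) as [a <-]. zsimp.
  rewrite sym_unit_spec, sym_mul_spec. f_equal. apply perm_eq. reflexivity.
Qed.

Lemma sym_inv_l :
  comp sym_mul (pair sym_inv (idm (Fob A (perm Y)))) = comp sym_unit (bang (Fob A (perm Y))).
Proof.
  apply zmap_faithful. intro x. destruct (eta_surj x) as [a <-]. zsimp.
  rewrite sym_unit_spec, sym_inv_spec, sym_mul_spec. f_equal. apply perm_eq, pK.
Qed.

Lemma sym_inv_r :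
  comp sym_mul (pair (idm (Fob A (perm Y))) sym_inv) = comp sym_unit (bang (Fob A (perm Y))).
Proof.
  apply zmap_faithful. intro x. destruct (eta_surj x) as [a <-]. zsimp.
  rewrite sym_unit_spec, sym_inv_spec, sym_mul_spec. f_equal. apply perm_eq, pK'.
Qed.

Definition SymGrp : GroupObj C :=
  @Build_GroupObj C (Fob A (perm Y)) sym_mul sym_unit sym_inv
    sym_assoc sym_unit_l sym_unit_r sym_inv_l sym_inv_r.

End SymmetricGroup.

Section EpiSurjective.
Variables G Q : GroupObj C.
Variable q : Hom C (gcar G) (gcar Q).
Hypothesis Hq : is_group_hom G Q q.
Hypothesis HQ : discrete (gcar Q).
Hypothesis q_epi : forall (H : GroupObj C) (f1 f2 : Hom C (gcar Q) (gcar H)),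
    is_group_hom Q H f1 -> is_group_hom Q H f2 -> comp f1 q = comp f2 q -> f1 = f2.

Definition in_image (y : z C (gcar Q)) : Prop := exists g, zmap q g = y.
Local Notation Yt := (bool * z C (gcar Q))%type.

Lemma in_image_translate (g : z C (gcar G)) (x : z C (gcar Q)) :
  in_image (zmul (zmap q g) x) <-> in_image x.
Proof.
  split.
  - intros [g' E]. exists (zmul (zinv g) g').
    rewrite (proj1 (hom_iff q) Hq), E, (hom_inv g Hq), <- zassoc, zinv_l, zunit_l. reflexivity.
  - intros [g' <-]. exists (zmul g g'). apply (proj1 (hom_iff q) Hq).
Qed.

Definition flip (p : Yt) : Yt :=
  if excluded_middle_informative (in_image (snd p)) then (negb (fst p), snd p) else p.

Lemma flip_in b x : in_image x -> flip (b, x) = (negb b, x).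
Proof. intro Sx. unfold flip. simpl. destruct (excluded_middle_informative _); tauto. Qed.

Lemma flip_out b x : ~ in_image x -> flip (b, x) = (b, x).
Proof. intro Sx. unfold flip. simpl. destruct (excluded_middle_informative _); tauto. Qed.

Lemma flip_flip p : flip (flip p) = p.
Proof.
  destruct p as [b x]. destruct (classic (in_image x)) as [Sx | Sx].
  - rewrite !(flip_in _ Sx), Bool.negb_involutive. reflexivity.
  - rewrite !(flip_out _ Sx). reflexivity.
Qed.

Definition sigma : perm Yt := @Perm Yt flip flip flip_flip flip_flip.

Definition phi1 (h : z C (gcar Q)) : perm Yt.
Proof.
  refine (@Perm Yt (fun p => (fst p, zmul h (snd p)))
                   (fun p => (fst p, zmul (zinv h) (snd p))) _ _); intros [b x]; simpl.
  - rewrite <- zassoc, zinv_l, zunit_l. reflexivity.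
  - rewrite <- zassoc, zinv_r, zunit_l. reflexivity.
Defined.

Definition phi2 (h : z C (gcar Q)) : perm Yt := pmul sigma (pmul (phi1 h) sigma).

Lemma phi1_hom h k : phi1 (zmul h k) = pmul (phi1 h) (phi1 k).
Proof. apply perm_eq. intros [b x]. simpl. rewrite zassoc. reflexivity. Qed.

Lemma phi2_hom h k : phi2 (zmul h k) = pmul (phi2 h) (phi2 k).
Proof.
  apply perm_eq. intro y. unfold phi2. simpl. rewrite flip_flip, zassoc. reflexivity.
Qed.

(* Over the image of q, translation commutes with sigma, so phi1 = phi2. *)
Lemma phi1_phi2_on_image (g : z C (gcar G)) : phi1 (zmap q g) = phi2 (zmap q g).
Proof.
  apply perm_eq. intros [b x]. unfold phi2. simpl.
  destruct (classic (in_image x)) as [Sx | Sx].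
  - assert (Sgx : in_image (zmul (zmap q g) x)) by (apply in_image_translate; exact Sx).
    rewrite (flip_in _ Sx). simpl. rewrite (flip_in _ Sgx), Bool.negb_involutive. reflexivity.
  - assert (Sgx : ~ in_image (zmul (zmap q g) x)) by (rewrite in_image_translate; exact Sx).
    rewrite (flip_out _ Sx). simpl. rewrite (flip_out _ Sgx). reflexivity.
Qed.

(* phi1 and phi2 lift to homomorphisms Q -> Sym Y that agree after q, so
   they agree; at (true, 1) this says every y lies in S. *)
Lemma epi_surjective (y : z C (gcar Q)) : in_image y.
Proof.
  pose (to_sym := fun phi : z C (gcar Q) -> perm Yt => fun x => eta A (phi x)).
  destruct (@discrete_lift_hom Q (SymGrp Yt) (to_sym phi1) HQ) as [f1 [Hf1 E1]].
  { intros h k. unfold to_sym. rewrite phi1_hom. symmetry. apply sym_mul_spec. }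
  destruct (@discrete_lift_hom Q (SymGrp Yt) (to_sym phi2) HQ) as [f2 [Hf2 E2]].
  { intros h k. unfold to_sym. rewrite phi2_hom. symmetry. apply sym_mul_spec. }
  assert (Ef : f1 = f2).
  { apply (q_epi Hf1 Hf2). apply zmap_faithful. intro g.
    rewrite !zmap_comp, E1, E2. unfold to_sym. rewrite phi1_phi2_on_image. reflexivity. }
  assert (Ey : phi1 y = phi2 y).
  { pose proof (E1 y) as E1y. rewrite Ef, E2 in E1y. symmetry. exact (eta_inj E1y). }
  assert (S1 : in_image (zunit Q)) by (exists (zunit G); exact (hom_unit Hq)).
  pose proof (f_equal (fun p => pf p (true, zunit Q)) Ey) as Ep. unfold phi2 in Ep. simpl in Ep.
  rewrite (flip_in _ S1) in Ep. simpl in Ep. rewrite zunit_r in Ep.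
  destruct (classic (in_image y)) as [Sy | Sy]; [exact Sy |].
  rewrite (flip_out _ Sy) in Ep. discriminate (f_equal fst Ep).
Qed.

End EpiSurjective.
End Topological.
End Points.

Unset Implicit Arguments.

Theorem proposition2p7 (C : ConcreteCat) (G U Q : GroupObj C)
  (i : Hom C (gcar U) (gcar G)) (q : Hom C (gcar G) (gcar Q)) :
  topological C ->
  open_normal_with_quotient i q ->
  exists s : Hom C (gcar Q) (gcar G), comp q s = idm (gcar Q).
Proof.
  intros [AD [[Aterm _] Atop]] [[_ [Hcok _]] HQ].
  apply (section_of_surjection HQ).
  exact (epi_surjective (disc_ff AD) Aterm Atop (proj1 Hcok) HQ (cokernel_epi (disc_ff AD) Hcok)).
Qed.
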